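(* Let $X,Y\subseteq\Sigma^*$ be regular languages and let $d$ be the number of states of the minimal deterministic finite automaton recognizing $Y$. Then $\overrightarrow{\mathrm{AH}}_{\mathrm{ned}}(X,Y)\ge\frac{1}{d}\cdot\overrightarrow{\mathrm{AC}}(X,Y)$.
   Context: An edit path from $x$ to $y$ is a sequence $p=(a_1,b_1)\cdots(a_n,b_n)$ with $(a_i,b_i)\in(\Sigma\cup\{\varepsilon\})^2\setminus\{(\varepsilon,\varepsilon)\}$, $a_1\cdots a_n=x$, $b_1\cdots b_n=y$; $|p|=n$ and $\mathrm{wgt}(p)=|\{i:a_i\ne b_i\}|$. $\mathrm{ed}(x,y)=\min_p\mathrm{wgt}(p)$; $\mathrm{ned}(x,y)=\min_p\mathrm{wgt}(p)/|p|$ ($\mathrm{ned}(\varepsilon,\varepsilon)=0$). $\overrightarrow{\mathrm{AH}}_{\mathrm{ned}}(X,Y)=\lim_{k\to\infty}\sup_{x\in X,|x|\ge k}\inf_{y\in Y}\mathrm{ned}(x,y)$ and $\overrightarrow{\mathrm{AC}}(X,Y)=\lim_{n\to\infty}\sup_{x\in X,|x|\ge n}\inf_{y\in Y}\frac{\mathrm{ed}(x,y)}{|x|}$. *)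

From HB Require Import structures.
From mathcomp Require Import all_boot all_order all_algebra.
From mathcomp Require Import all_classical all_reals all_analysis.
Set Implicit Arguments. Unset Strict Implicit. Unset Printing Implicit Defensive.
Import Order.TTheory GRing.Theory Num.Theory.
Local Open Scope classical_set_scope.
Local Open Scope ring_scope.

Section EditDistance.
Variable Sigma : finType.
Variable R : realType.

(* An edit operation (a,b) with a,b in Sigma ∪ {ε}; None encodes ε. *)
Definition edit_op := (option Sigma * option Sigma)%type.

Definition is_edit_path (x y : seq Sigma) (p : seq edit_op) : Prop :=
  [/\ all (fun o => o != (None, None)) p,
      pmap id (map fst p) = x &
      pmap id (map snd p) = y].

Definition wgt (p : seq edit_op) : nat := count (fun o => o.1 != o.2) p.

Definition ed (x y : seq Sigma) : \bar R :=
  ereal_inf [set ((wgt p)%:R : R)%:E | p in is_edit_path x y].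

Definition ned (x y : seq Sigma) : \bar R :=
  if (x == [::]) && (y == [::]) then 0%E
  else ereal_inf [set ((wgt p)%:R / (size p)%:R : R)%:E | p in is_edit_path x y].

Definition AH_ned (X Y : set (seq Sigma)) : \bar R :=
  limn (fun k : nat =>
    ereal_sup [set ereal_inf [set ned x y | y in Y] | x in [set x | X x /\ (k <= size x)%N]]).

Definition AC_dir (X Y : set (seq Sigma)) : \bar R :=
  limn (fun n : nat =>
    ereal_sup [set ereal_inf [set (ed x y * ((size x)%:R^-1 : R)%:E)%E | y in Y]
              | x in [set x | X x /\ (n <= size x)%N]]).

End EditDistance.

Record dfa (Sigma : finType) := DFA {
  dfa_state : finType;
  dfa_start : dfa_state;
  dfa_trans : dfa_state -> Sigma -> dfa_state;
  dfa_final : pred dfa_state }.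

Definition dfa_accept (Sigma : finType) (A : dfa Sigma) (w : seq Sigma) : bool :=
  @dfa_final Sigma A (foldl (@dfa_trans Sigma A) (@dfa_start Sigma A) w).

Definition recognizes (Sigma : finType) (A : dfa Sigma) (L : set (seq Sigma)) : Prop :=
  forall w, L w <-> dfa_accept A w.

Definition regular (Sigma : finType) (L : set (seq Sigma)) : Prop :=
  exists A : dfa Sigma, recognizes A L.

Definition min_dfa_size (Sigma : finType) (L : set (seq Sigma)) (d : nat) : Prop :=
  (exists A : dfa Sigma, recognizes A L /\ #|@dfa_state Sigma A| = d) /\
  (forall A : dfa Sigma, recognizes A L -> (d <= #|@dfa_state Sigma A|)%N).

From HB Require Import structures.
From mathcomp Require Import all_boot all_order all_algebra.
From mathcomp Require Import all_classical all_reals all_analysis.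
From mathcomp Require Import zify ring.
Set Implicit Arguments. Unset Strict Implicit.
Import Order.TTheory GRing.Theory Num.Theory.
Local Open Scope classical_set_scope.
Local Open Scope ring_scope.

(* Take x and an edit path p from x to some y in Y.  Shortening every maximal
   run of insertions of p to fewer than d letters (pumping down inside the
   d-state automaton of Y) keeps the target in Y and leaves a path p' of length
   less than d (|x| + 1); since only insertions, each of weight 1, were removed,
   wgt p - wgt p' = |p| - |p'|.  Hence ed(x, Y) / |x| <= wgt p' / |x|
   <= d (wgt p / |p| + 1 / |x|).  Taking suprema over the words of X of length
   at least k gives AC_k <= d (AH_k + 1 / k), and k -> oo concludes. *)

Section EditPaths.
Variable Sigma : finType.
Local Notation op := (edit_op Sigma).

Definition ins (c : Sigma) : op := (None, Some c).
Definition edit_src (p : seq op) := pmap id (map fst p).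
Definition edit_tgt (p : seq op) := pmap id (map snd p).
Definition proper_ops (p : seq op) := all (fun o => o != (None, None)) p.


Lemma edit_src_cons o p : edit_src (o :: p) = pmap id [:: o.1] ++ edit_src p.
Proof. by case: o => [[]]. Qed.

Lemma edit_tgt_cons o p : edit_tgt (o :: p) = pmap id [:: o.2] ++ edit_tgt p.
Proof. by case: o => [? []]. Qed.

Lemma edit_src_cat p q : edit_src (p ++ q) = edit_src p ++ edit_src q.
Proof. by rewrite /edit_src map_cat pmap_cat. Qed.

Lemma edit_tgt_cat p q : edit_tgt (p ++ q) = edit_tgt p ++ edit_tgt q.
Proof. by rewrite /edit_tgt map_cat pmap_cat. Qed.

Lemma edit_src_ins s : edit_src (map ins s) = [::].
Proof. by elim: s. Qed.

Lemma edit_tgt_ins s : edit_tgt (map ins s) = s.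
Proof. by elim: s => //= c s; rewrite /edit_tgt /= => ->. Qed.

Lemma wgt_ins s : wgt (map ins s) = size s.
Proof. by elim: s => //= c s; rewrite /wgt /= => ->. Qed.

Lemma wgt_cat (p q : seq op) : wgt (p ++ q) = (wgt p + wgt q)%N.
Proof. exact: count_cat. Qed.

Lemma wgt_cons (o : op) p : wgt (o :: p) = ((o.1 != o.2) + wgt p)%N.
Proof. by []. Qed.

Lemma proper_ops_ins s : proper_ops (map ins s).
Proof. by elim: s. Qed.

Lemma proper_ops_cat p q : proper_ops (p ++ q) = proper_ops p && proper_ops q.
Proof. exact: all_cat. Qed.

Section Pumping.
Variables (S : finType) (trans : S -> Sigma -> S).

Lemma short_word_same_state s q : exists s',
  [/\ (size s' < #|S|)%N, (size s' <= size s)%N & foldl trans q s' = foldl trans q s].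
Proof.
have [n] := ubnP (size s); elim: n s => // n IH s /ltnSE hs.
have [small | large] := ltnP (size s) #|S|; first by exists s.
pose run := [seq foldl trans q (take i s) | i <- iota 0 (size s).+1].
have /(uniqPn q) [i [j [ij]]] : ~~ uniq run.
  apply: contraL large => /card_uniqP card_run; rewrite -ltnNge.
  by have := max_card (mem run); rewrite card_run size_map size_iota.
rewrite size_map size_iota => js.
rewrite !(nth_map 0) ?size_iota ?(ltn_trans ij) // !nth_iota ?(ltn_trans ij) //.
rewrite !add0n => loop.
have i_lt : (i < size s)%N by rewrite (leq_trans ij) // -ltnS.
have [|s' [s'S s'le s'fold]] := IH (take i s ++ drop j s).
  by rewrite size_cat size_take size_drop i_lt; lia.
exists s'; split => //.
  by rewrite (leq_trans s'le) // size_cat size_take size_drop i_lt; lia.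
by rewrite s'fold foldl_cat loop -foldl_cat cat_take_drop.
Qed.

Lemma pump_insertions s p q : proper_ops p -> exists p' k,
  [/\ proper_ops p', edit_src p' = edit_src p,
      foldl trans q (edit_tgt p') = foldl trans q (edit_tgt (map ins s ++ p)),
      size (map ins s ++ p) = (size p' + k)%N /\ wgt (map ins s ++ p) = (wgt p' + k)%N
    & (size p' < #|S| * (size (edit_src p)).+1)%N].
Proof.
elim: p s q => [|o r IH] s q.
  move=> _; have [s' [s'S s'le s'fold]] := short_word_same_state s q.
  exists (map ins s'), (size s - size s')%N; rewrite cats0 !size_map !wgt_ins.
  by rewrite proper_ops_ins !edit_src_ins !edit_tgt_ins muln1; split => //; lia.
move=> /andP[ok_o ok_r]; case: o ok_o => [[a|] b] ok_o; last first.
  case: b ok_o => // c _; have := IH (rcons s c) q ok_r.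
  by rewrite map_rcons cat_rcons.
have [s' [s'S s'le s'fold]] := short_word_same_state s q.
have [r' [k [ok_r' r'src r'fold [r'size r'wgt] r'S]]] :=
  IH [::] (foldl trans (foldl trans q s) (pmap id [:: b])) ok_r.
exists (map ins s' ++ (Some a, b) :: r'), (size s - size s' + k)%N; split.
- by rewrite proper_ops_cat proper_ops_ins /=.
- by rewrite edit_src_cat edit_src_ins !edit_src_cons r'src.
- by rewrite !edit_tgt_cat !edit_tgt_cons !edit_tgt_ins !foldl_cat s'fold r'fold.
- rewrite !size_cat !wgt_cat !wgt_cons !size_map !wgt_ins /=.
  by move: r'size r'wgt => /= -> ->; split; lia.
- rewrite edit_src_cons /= size_cat size_map /= mulnS.
  by rewrite -addSn leq_add.
Qed.
End Pumping.

Lemma card_dfa_state_gt0 (A : dfa Sigma) : (0 < #|dfa_state A|)%N.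
Proof. by apply/card_gt0P; exists (dfa_start A). Qed.

Lemma pump_edit_path (A : dfa Sigma) (Y : set (seq Sigma)) x y p :
  recognizes A Y -> Y y -> is_edit_path x y p -> exists y' p' k,
  [/\ Y y', is_edit_path x y' p',
      size p = (size p' + k)%N /\ wgt p = (wgt p' + k)%N
    & (size p' < #|dfa_state A| * (size x).+1)%N].
Proof.
move=> recA Yy [ok_p src_p tgt_p].
change (edit_src p = x) in src_p; change (edit_tgt p = y) in tgt_p.
have [p' [k [ok_p' src_p' fold_p' sw bound]]] :=
  pump_insertions (@dfa_trans _ A) [::] (dfa_start A) ok_p.
exists (edit_tgt p'), p', k; split => //.
- by apply/recA; rewrite /dfa_accept fold_p' /= tgt_p; apply/recA.
- by split => //; change (edit_src p' = x); rewrite src_p'.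
- by rewrite -src_p.
Qed.
End EditPaths.

Lemma pumped_ratio_le (R : realFieldType) (w L k n d : nat) :
  (0 < n)%N -> (w <= L)%N -> (L < d * n.+1)%N ->
  w%:R / n%:R <= d%:R * ((w + k)%:R / (L + k)%:R + n%:R^-1) :> R.
Proof.
move=> n_gt0 wL Ld.
have [Lk0 | Lk_gt0] := posnP (L + k).
  have -> : w = 0%N by lia.
  by rewrite mul0r mulr_ge0 ?addr_ge0 ?divr_ge0 ?invr_ge0.
have cross : (w * (L + k) <= d * n * (w + k) + d * (L + k))%N.
  have : (w * L <= w * (d * n.+1))%N by rewrite leq_mul2l; apply/orP; right; lia.
  have : (w * k <= d * n.+1 * k)%N by rewrite leq_mul2r; apply/orP; right; lia.
  nia.
rewrite -subr_ge0.
have -> : d%:R * ((w + k)%:R / (L + k)%:R + n%:R^-1) - w%:R / n%:R =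
    ((d * n * (w + k) + d * (L + k))%:R - (w * (L + k))%:R) / (n * (L + k))%:R :> R.
  by rewrite !natrD !natrM; field; rewrite -natrD !pnatr_eq0 -!lt0n Lk_gt0 n_gt0.
by rewrite divr_ge0 // subr_ge0 ler_nat.
Qed.

Local Open Scope ereal_scope.

Section RelativeDistances.
Variables (R : realType) (Sigma : finType).
Implicit Types (X Y : set (seq Sigma)) (x y : seq Sigma).

Definition ned_to Y x : \bar R := ereal_inf [set ned R x y | y in Y].

Definition ed_rel_to Y x : \bar R :=
  ereal_inf [set ed R x y * ((size x)%:R^-1 : R)%:E | y in Y].

Definition tail_sup X (f : seq Sigma -> \bar R) (k : nat) : \bar R :=
  ereal_sup [set f x | x in [set x | X x /\ (k <= size x)%N]].

Lemma tail_sup_nonincreasing X f : {homo tail_sup X f : k l / (k <= l)%N >-> l <= k}.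
Proof.
move=> k l kl; apply: ereal_sup_le; apply: image_subset => x [Xx lx].
by split => //; apply: leq_trans lx.
Qed.

Lemma limn_tail_sup X f : limn (tail_sup X f) = ereal_inf (range (tail_sup X f)).
Proof.
apply: cvg_lim; first exact: ereal_hausdorff.
exact: ereal_nonincreasing_cvgn (tail_sup_nonincreasing X f).
Qed.

Section OneAutomaton.
Variables (Y : set (seq Sigma)) (A : dfa Sigma).
Hypothesis recA : recognizes A Y.
Local Notation d := #|dfa_state A|.

Lemma ed_rel_to_le_path x y p : (0 < size x)%N -> Y y -> is_edit_path x y p ->
  ed_rel_to Y x <= (d%:R * ((wgt p)%:R / (size p)%:R + (size x)%:R^-1))%:E.
Proof.
move=> x_gt0 Yy path_p.
have [y' [p' [k [Yy' path_p' [-> ->] bound]]]] := pump_edit_path recA Yy path_p.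
apply: le_trans (_ : ed R x y' * ((size x)%:R^-1)%:E <= _).
  by apply: ereal_inf_lbound; exists y'.
apply: le_trans (_ : (wgt p')%:R%:E * ((size x)%:R^-1)%:E <= _).
  apply: lee_wpmul2r; first by rewrite lee_fin invr_ge0.
  by apply: ereal_inf_lbound; exists p'.
by rewrite -EFinM lee_fin pumped_ratio_le // count_size.
Qed.

Lemma ed_rel_to_le_ned_to x : (0 < size x)%N ->
  ed_rel_to Y x <= d%:R%:E * (ned_to Y x + ((size x)%:R^-1)%:E).
Proof.
move=> x_gt0; have d_gt0 : (0 < d%:R :> R)%R by rewrite ltr0n card_dfa_state_gt0.
rewrite -lee_pdivrMl // -leeBlDr //.
have x_nil : (x == [::]) = false by apply/negbTE; rewrite -size_eq0 -lt0n.
apply: le_ereal_inf_tmp => _ [y Yy <-]; rewrite /ned x_nil /=.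
apply: le_ereal_inf_tmp => _ [p path_p <-].
by rewrite EFinN leeBlDr // lee_pdivrMl // -EFinD -EFinM (ed_rel_to_le_path x_gt0 Yy path_p).
Qed.

Lemma tail_sup_ed_rel_to_le X k : (0 < k)%N ->
  tail_sup X (ed_rel_to Y) k <=
  d%:R%:E * (tail_sup X (ned_to Y) k + (k%:R^-1 : R)%:E).
Proof.
move=> k_gt0; apply: ge_ereal_sup => _ [x [Xx kx] <-].
have x_gt0 : (0 < size x)%N by apply: leq_trans kx.
apply: le_trans (ed_rel_to_le_ned_to x_gt0) _.
apply: lee_wpmul2l; first by rewrite lee_fin.
apply: leeD; first by apply: ereal_sup_ubound; exists x.
by rewrite lee_fin lef_pV2 ?ler_nat // posrE ltr0n // (leq_trans k_gt0).
Qed.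

End OneAutomaton.
End RelativeDistances.

Lemma scaled_inf_le (R : realType) (u v : nat -> \bar R) (c : R) : (0 < c)%R ->
  {homo v : k l / (k <= l)%N >-> l <= k} ->
  (forall k, (0 < k)%N -> u k <= c%:E * (v k + (k%:R^-1)%:E)) ->
  (c^-1)%:E * ereal_inf (range u) <= ereal_inf (range v).
Proof.
move=> c_gt0 v_noninc uv; apply: le_ereal_inf_tmp => _ [k _ <-].
apply/lee_addgt0Pr => e e_gt0.
pose m := maxn k.+1 (Num.truncn e^-1).+1.
have km : (k < m)%N by rewrite leq_max ltnSn.
have me : (m%:R^-1 <= e)%R.
  rewrite -[e]invrK lef_pV2 ?posrE ?invr_gt0 ?ltr0n ?(leq_trans _ km) //.
  by rewrite ltW // (lt_le_trans (truncnS_gt _)) // ler_nat leq_maxr.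
apply: le_trans (_ : c^-1%:E * u m <= _).
  apply: lee_wpmul2l; first by rewrite lee_fin invr_ge0 ltW.
  by apply: ereal_inf_lbound; exists m.
rewrite lee_pdivrMl //; apply: le_trans (uv m (leq_trans _ km)) _ => //.
apply: lee_wpmul2l; first by rewrite lee_fin ltW.
by apply: leeD; [apply: v_noninc; apply: ltnW | rewrite lee_fin].
Qed.

Theorem mainTheorem16 (R : realType) (Sigma : finType) (X Y : set (seq Sigma)) (d : nat) :
  regular X -> regular Y -> min_dfa_size Y d ->
  (((d%:R : R)^-1)%:E * AC_dir R X Y <= AH_ned R X Y)%E.
Proof.
move=> _ _ [[A [recA <-]] _].
have -> : AH_ned R X Y = ereal_inf (range (tail_sup X (ned_to R Y))).
  exact: limn_tail_sup.
have -> : AC_dir R X Y = ereal_inf (range (tail_sup X (ed_rel_to R Y))).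
  exact: limn_tail_sup.
apply: scaled_inf_le; first by rewrite ltr0n card_dfa_state_gt0.
  exact: tail_sup_nonincreasing.
by move=> k; apply: tail_sup_ed_rel_to_le.
Qed.
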